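(* For every $T>0$, $\lambda>0$ and $\epsilon>0$ there is $M=M(T,\lambda,\epsilon)$ such that $$\liminf_{m\to\infty}\mathbb{P}^{(m)}_\sigma\big(\Lambda(T,M,\lambda)\big)>1-\epsilon.$$
   Context: Fix a real exponent $b>0$ and a sequence $\sigma=(\sigma_p)_{p\in\mathcal P}$ of nonnegative reals indexed by the set $\mathcal P$ of primes with $\sum_p\sigma_p<\infty$. For a prime $p$, $\mathbb{Q}_p$ denotes the $p$-adic numbers with absolute value $|\cdot|_p$ and $\mathbb{Z}_p$ its closed unit ball. Let $G_p\subset\mathbb{Q}_p$ be the set of $p$-adic numbers of the form $\sum_{k<0}a_kp^k$ with $a_k\in\{0,\dots,p-1\}$, only finitely many nonzero; $G_p$ is a set of representatives of $\mathbb{Q}_p/\mathbb{Z}_p$ and is given the group structure of $\mathbb{Q}_p/\mathbb{Z}_p$. Let $X^{(p)}$ be a $G_p$-valued random variable with $\Pr(|X^{(p)}|_p=p^k)=(p^b-1)p^{-kb}$ for every integer $k\ge1$, and, conditionally on $|X^{(p)}|_p=p^k$, uniformly distributed on the finite set $\{x\in G_p:|x|_p=p^k\}$. Let $X^{(p)}_1,X^{(p)}_2,\dots$ be i.i.d. copies of $X^{(p)}$ and $S^{(p)}_n=X^{(p)}_1+\dots+X^{(p)}_n$ (sum in the group $G_p$), $S^{(p)}_0=0$. Put $D_p=\frac{p^b(p-1)}{p^{b+1}-1}\sigma_p$. For an integer $m\ge0$, let $\mathbb{P}^{(m)}_p$ be the law on $D(\mathbb{Q}_p)$ (càdlàg paths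 $[0,\infty)\to\mathbb{Q}_p$) of $t\mapsto p^mS^{(p)}_{\lfloor D_pp^{mb}t\rfloor}$, and $\mathbb{P}^{(m)}_\sigma=\prod_{p}\mathbb{P}^{(m)}_p$ the product measure on $\prod_pD(\mathbb{Q}_p)$ (independent components). For $x=(x_p)_p\in\prod_pD(\mathbb{Q}_p)$, $T>0$, $M>0$, $\lambda>0$, define the event $\Lambda(T,M,\lambda)=\{x:\ \sup_{s\le T}|x_p(s)|_p/p<\lambda\text{ for all primes }p\ge M\}$. *)

From HB Require Import structures.
From mathcomp Require Import all_boot all_order all_algebra.
From mathcomp Require Import all_classical all_reals all_analysis.
Set Implicit Arguments. Unset Strict Implicit. Unset Printing Implicit Defensive.
Import Order.TTheory GRing.Theory Num.Theory.
Local Open Scope classical_set_scope.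
Local Open Scope ring_scope.

Definition padic_abs {R : realType} (p : nat) (q : rat) : R :=
  if q == 0 then 0
  else (p%:R ^+ logn p `|denq q|%N) / (p%:R ^+ logn p `|numq q|%N).

(* G_p: p-adic numbers sum_{k<0} a_k p^k (finitely many nonzero digits);
   these are exactly the rationals in [0,1) whose denominator is a power of p. *)
Definition in_Gp (p : nat) (q : rat) : Prop :=
  0 <= q /\ q < 1 /\ exists k : nat, denq q = (p ^ k)%N%:Z.

(* group law of G_p ≅ Q_p/Z_p on representatives: add, then drop the
   integer part (the integer part lies in Z ⊂ Z_p). *)
Definition Gp_add (x y : rat) : rat := (x + y) - (Num.floor (x + y))%:~R.

(* the random walk S_n = X_0 + ... + X_{n-1} in G_p (X_i here is the paper's X_{i+1}) *)
Fixpoint walk {Omega : Type} (X : nat -> Omega -> rat) (n : nat) (w : Omega) : rat :=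
  match n with
  | 0 => 0
  | n'.+1 => Gp_add (walk X n' w) (X n' w)
  end.

Definition Dp {R : realType} (b : R) (sigma : nat -> R) (p : nat) : R :=
  (p%:R `^ b) * (p%:R - 1) / (p%:R `^ (b + 1) - 1) * sigma p.

Definition scaled_path {R : realType} {Omega : Type} (b : R) (sigma : nat -> R)
    (X : nat -> nat -> Omega -> rat) (p m : nat) (t : R) (w : Omega) : rat :=
  (p ^ m)%N%:R * walk (X p) (Num.truncn (Dp b sigma p * (p%:R `^ (m%:R * b)) * t)) w.

Definition Lambda {R : realType} {Omega : Type} (b : R) (sigma : nat -> R)
    (X : nat -> nat -> Omega -> rat) (m : nat) (T M lambda : R) : set Omega :=
  [set w | forall p : nat, prime p -> M <= p%:R ->
     sup [set padic_abs p (scaled_path b sigma X p m s w) / p%:R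
          | s in [set s : R | 0 <= s <= T]] < lambda].

Definition mutually_independent {d : measure_display} {Omega : measurableType d}
    {R : realType} (P : probability Omega R) (X : nat -> nat -> Omega -> rat) : Prop :=
  forall (s : seq (nat * nat)) (A : nat * nat -> set rat),
    uniq s -> all (fun j => prime j.1) s ->
    P (\bigcap_(j in [set` s]) (X j.1 j.2 @^-1` A j)) =
    (\prod_(j <- s) P (X j.1 j.2 @^-1` A j))%E.

(* law of X^(p): G_p-valued, P(|X|_p = p^k) = (p^b - 1) p^(-k b) for k >= 1,
   and conditionally on |X|_p = p^k uniform on {x in G_p : |x|_p = p^k}. *)
Definition has_law_Xp {d : measure_display} {Omega : measurableType d}
    {R : realType} (P : probability Omega R) (b : R) (p : nat)
    (Y : Omega -> rat) : Prop :=
  (forall w, in_Gp p (Y w)) /\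
  (forall A : set rat, measurable (Y @^-1` A)) /\
  (forall k : nat, (1 <= k)%N ->
     P [set w | padic_abs (R:=R) p (Y w) = p%:R ^+ k] =
       ((p%:R `^ b - 1) * p%:R `^ (- (k%:R * b)))%:E) /\
  (forall (k : nat) (x y : rat), (1 <= k)%N ->
     in_Gp p x -> in_Gp p y ->
     padic_abs p x = p%:R ^+ k :> R -> padic_abs p y = p%:R ^+ k :> R ->
     P [set w | Y w = x] = P [set w | Y w = y]).

From HB Require Import structures.
From mathcomp Require Import all_boot all_order all_algebra.
From mathcomp Require Import all_classical all_reals all_analysis.
From mathcomp Require Import ring lra.
Import Order.TTheory GRing.Theory Num.Theory.
Local Open Scope classical_set_scope.
Local Open Scope ring_scope.

(* A step x of G_p with |x|_p <= p^m satisfies p^m x in Z, and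
   Z is closed under the group law of G_p; so if none of the first
   D_p p^(m b) T steps of the p-th walk has |X|_p > p^m, then the rescaled
   path p^m S stays in Z, where |.|_p <= 1, and sup_{s <= T} |x_p(s)|_p / p
   <= 1/p < lambda as soon as p > 1/lambda.  A single step is that large
   with probability p^(-m b), so by the union bound the p-th walk fails
   with probability at most T D_p <= T sigma_p, uniformly in m.  Summing
   over p >= M, the bad event has probability at most T times a tail of the
   convergent series sum_p sigma_p, which is < eps/2 for M large. *)

Definition pscaled_int (p m : nat) (q : rat) : Prop :=
  (p ^ m)%N%:R * q \is a Num.int.

Lemma Gp_add_pscaled_int p m x y :
  pscaled_int p m x -> pscaled_int p m y -> pscaled_int p m (Gp_add x y).
Proof.
rewrite /pscaled_int /Gp_add => hx hy.
rewrite mulrBr mulrDr; apply: rpredB; first exact: rpredD.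
by apply: rpredM; [exact: natr_int | exact: intr_int].
Qed.

Lemma walk_pscaled_int {Omega : Type} (Y : nat -> Omega -> rat) p m w n :
  (forall i, (i < n)%N -> pscaled_int p m (Y i w)) ->
  pscaled_int p m (walk Y n w).
Proof.
elim: n => [|n IHn] HY /=; first by rewrite /pscaled_int mulr0.
apply: Gp_add_pscaled_int; last exact: HY.
by apply: IHn => i /ltnW; exact: HY.
Qed.

Lemma eq_walk {Omega : Type} (Y : nat -> Omega -> rat) n w w' :
  (forall i, (i < n)%N -> Y i w = Y i w') -> walk Y n w = walk Y n w'.
Proof.
elim: n => [|n IHn] HY //=.
by rewrite HY // IHn // => i /ltnW; exact: HY.
Qed.

Lemma padic_abs_int_le1 {R : realType} p q : prime p -> q \is a Num.int ->
  padic_abs (R:=R) p q <= 1.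
Proof.
move=> pp qZ; rewrite /padic_abs; case: ifP => // _.
have -> : denq q = 1 by move: qZ; rewrite intrEfloor => /eqP <-; rewrite denq_int.
rewrite /= logn1 expr0 mul1r invf_le1.
  by apply: exprn_ege1; rewrite ler1n prime_gt0.
by apply: exprn_gt0; rewrite ltr0n prime_gt0.
Qed.

Lemma pscaled_int_Gp {R : realType} p m k q : prime p -> in_Gp p q ->
  (1 <= k <= m)%N -> padic_abs (R:=R) p q = p%:R ^+ k -> pscaled_int p m q.
Proof.
move=> pp [_ [_ [j qj]]] /andP[k1 km].
have p1 : (1 < p)%N by exact: prime_gt1.
rewrite /padic_abs; case: ifP => [_ /esym/eqP|q0].
  by rewrite expf_eq0 pnatr_eq0 (gtn_eqF (prime_gt0 pp)) andbF.
rewrite qj /= pfactorK // => abs_q.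
have jm : (j <= m)%N.
  case: j qj abs_q => [//|j] qj.
  have cp : coprime p `|numq q|.
    by have := coprime_num_den q; rewrite qj /= coprime_sym coprime_pexpl.
  rewrite (logn_coprime cp) expr0 divr1 => /eqP.
  by rewrite -!natrX eqr_nat eqn_exp2l // => /eqP ->.
rewrite /pscaled_int -(divq_num_den q) qj -(subnK jm) expnD natrM.
have -> : ((p ^ j)%N%:Z)%:Q = ((p ^ j)%N)%:R :> rat by [].
rewrite -mulrA [X in _ * X]mulrCA mulfV ?mulr1.
  by apply: rpredM; [exact: natr_int | exact: intr_int].
by rewrite pnatr_eq0 gtn_eqF // expn_gt0 prime_gt0.
Qed.

Section step_law.
Variables (R : realType) (d : measure_display) (Omega : measurableType d).
Variables (P : probability Omega R) (b : R) (p : nat) (Y : Omega -> rat).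
Hypotheses (b_gt0 : 0 < b) (p_prime : prime p) (lawY : has_law_Xp P b p Y).

Let c := p%:R `^ b.

Let c_gt0 : 0 < c.
Proof. by apply: powR_gt0; rewrite ltr0n prime_gt0. Qed.

Let abs_eq k := [set w | padic_abs (R:=R) p (Y w) = p%:R ^+ k].

Let abs_between n := [set w | exists k, (1 <= k <= n)%N /\ abs_eq k w].

Let measurable_abs_eq k : measurable (abs_eq k).
Proof.
by case: lawY => _ [mY _]; exact: (mY [set q | padic_abs (R:=R) p q = p%:R ^+ k]).
Qed.

Let abs_between_S n : abs_between n.+1 = abs_between n `|` abs_eq n.+1.
Proof.
apply/seteqP; split => w /=.
  move=> [k [/andP[k1 kn] Ak]]; move: kn; rewrite leq_eqVlt.
  by case/orP=> [/eqP nk|kn]; [right; rewrite -nk | left; exists k; rewrite k1].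
case=> [[k [/andP[k1 kn] Ak]]|An]; first by exists k; rewrite k1 ltnW.
by exists n.+1; rewrite leqnn.
Qed.

Let abs_between0 : abs_between 0 = set0.
Proof. by apply/seteqP; split => w //= [[|k] [/andP[]]]. Qed.

Let measurable_abs_between n : measurable (abs_between n).
Proof.
elim: n => [|n IHn]; first by rewrite abs_between0.
by rewrite abs_between_S; exact: measurableU.
Qed.

Let prob_abs_between n : P (abs_between n) = (1 - c ^- n)%:E.
Proof.
case: lawY => _ [_ [lawK _]].
elim: n => [|n IHn].
  by rewrite expr0 invr1 subrr abs_between0 measure0.
rewrite abs_between_S measureU //; last first.
  apply/seteqP; split => w //= [[k [/andP[_ kn] Ak]] An].
  move: Ak; rewrite /abs_eq /= An => /eqP.
  rewrite -!natrX eqr_nat eqn_exp2l ?prime_gt1 // => /eqP nk.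
  by move: kn; rewrite -nk ltnn.
transitivity ((1 - c ^- n)%:E + ((c - 1) / c ^+ n.+1)%:E)%E.
  congr (_ + _)%E; first exact: IHn.
  apply: etrans (lawK n.+1 isT) _.
  by congr ((_ * _)%:E); rewrite powRN mulrC -/c powRrM powR_mulrn ?powR_ge0.
by rewrite -EFinD exprSr invfM; congr (_%:E); field; rewrite expf_neq0 // gt_eqF.
Qed.

Lemma prob_not_pscaled_int m :
  (P [set w | ~ pscaled_int p m (Y w)] <= (c ^- m)%:E)%E.
Proof.
case: lawY => inGp [mY _].
have sub : [set w | ~ pscaled_int p m (Y w)] `<=` ~` abs_between m.
  by move=> w /= notZ [k [km Ak]]; apply: notZ; exact: pscaled_int_Gp (inGp w) km Ak.
have PC : (P (~` abs_between m) <= (c ^- m)%:E)%E.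
  by rewrite probability_setC // prob_abs_between -EFinB opprB addrCA subrr addr0.
apply: le_trans PC; apply: le_measure sub; rewrite inE.
  exact: (mY [set q | ~ pscaled_int p m q]).
exact: measurableC.
Qed.

End step_law.

Lemma prob_bigsetU_le {R : realType} {d} {Omega : measurableType d}
    (P : probability Omega R) (F : nat -> set Omega) n (x : R) :
  (forall i, measurable (F i)) -> (forall i, (P (F i) <= x%:E)%E) ->
  (P (\big[setU/set0]_(i < n) F i) <= (n%:R * x)%:E)%E.
Proof.
move=> mF PF; elim: n => [|n IHn]; first by rewrite big_ord0 measure0 mul0r.
rewrite big_ord_recr /=; apply: le_trans (measureU2 _ _ _) _.
- exact: bigsetU_measurable.
- exact: mF.
by rewrite -natr1 mulrDl mul1r EFinD; apply: leeD; [exact: IHn | exact: PF].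
Qed.

Lemma Dp_bounds {R : realType} {b : R} {sigma : nat -> R} {p : nat} :
  0 < b -> prime p -> 0 <= sigma p -> 0 <= Dp b sigma p <= sigma p.
Proof.
move=> b0 pp s0; rewrite /Dp.
have p2 : (2 : R) <= p%:R by rewrite ler_nat prime_gt1.
have c1 : 1 <= p%:R `^ b.
  by rewrite -[X in X <= _](powRr0 (p%:R : R)) ler_powR ?ltW //; lra.
have -> : p%:R `^ (b + 1) = p%:R `^ b * p%:R :> R.
  by rewrite powRD ?powRr1 //; apply/implyP => _; rewrite pnatr_eq0 gtn_eqF // prime_gt0.
have den : 0 < p%:R `^ b * p%:R - 1 :> R by nra.
apply/andP; split.
  by apply: mulr_ge0 => //; apply: divr_ge0; [apply: mulr_ge0|]; lra.
by rewrite -[X in _ <= X]mul1r ler_wpM2r // ler_pdivrMr // mul1r; nra.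
Qed.

Definition nsteps {R : realType} (b : R) sigma p m (t : R) : nat :=
  Num.truncn (Dp b sigma p * p%:R `^ (m%:R * b) * t).

Lemma le_nsteps {R : realType} {b : R} {sigma : nat -> R} {p : nat} m {s t : R} :
  0 < b -> prime p -> 0 <= sigma p -> 0 <= s <= t ->
  (nsteps b sigma p m s <= nsteps b sigma p m t)%N.
Proof.
move=> b0 pp s0 /andP[_ st]; apply: le_truncn; apply: ler_wpM2l => //.
apply: mulr_ge0; last exact: powR_ge0.
by case/andP: (Dp_bounds b0 pp s0).
Qed.

Lemma prob_large_step_before {R : realType} {d} {Omega : measurableType d}
    (P : probability Omega R) (b : R) sigma (Y : nat -> Omega -> rat) p m (T : R) :
  0 < b -> prime p -> 0 <= sigma p -> 0 <= T ->
  (forall i, has_law_Xp P b p (Y i)) ->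
  (P (\big[setU/set0]_(i < nsteps b sigma p m T) [set w | ~ pscaled_int p m (Y i w)])
     <= (T * sigma p)%:E)%E.
Proof.
move=> b0 pp s0 T0 lawY.
set c := p%:R `^ b.
have c0 : 0 < c by apply: powR_gt0; rewrite ltr0n prime_gt0.
have cm0 : 0 < c ^+ m by exact: exprn_gt0.
have mF i : measurable [set w | ~ pscaled_int p m (Y i w)].
  by case: (lawY i) => _ [mY _]; exact: (mY [set q | ~ pscaled_int p m q]).
have PF i : (P [set w | ~ pscaled_int p m (Y i w)] <= (c ^- m)%:E)%E.
  exact: prob_not_pscaled_int.
apply: le_trans (prob_bigsetU_le P _ (nsteps b sigma p m T) _ mF PF) _.
have /andP[D0 D1] := Dp_bounds b0 pp s0.
rewrite /nsteps; have -> : p%:R `^ (m%:R * b) = c ^+ m by rewrite mulrC powRrM powR_mulrn ?ltW.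
rewrite lee_fin.
apply: le_trans (_ : Dp b sigma p * T <= _); last by rewrite mulrC ler_wpM2l.
rewrite ler_pdivrMr // [X in _ <= X]mulrAC truncn_le.
by apply: mulr_ge0 => //; apply: mulr_ge0 => //; exact: ltW.
Qed.

Lemma measurable_of_prefix {d} {Omega : measurableType d} (Y : nat -> Omega -> rat) N
    (S : set Omega) :
  (forall i (A : set rat), measurable (Y i @^-1` A)) ->
  (forall w w', (forall i, (i < N)%N -> Y i w = Y i w') -> S w -> S w') ->
  measurable S.
Proof.
move=> mY; elim: N S => [|N IHN] S HS.
  have [[w Sw]|nS] := pselect (exists w, S w).
    by rewrite (_ : S = setT) //; apply/seteqP; split => // w' _; exact: HS Sw.
  by rewrite (_ : S = set0) //; apply/seteqP; split => // w' Sw'; apply: nS; exists w'.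
pose S' q := [set w | exists w', [/\ S w', Y N w' = q &
   forall i, (i < N)%N -> Y i w' = Y i w]].
have -> : S = \bigcup_q (Y N @^-1` [set q] `&` S' q).
  apply/seteqP; split => w; first by move=> Sw; exists (Y N w) => //; split => //; exists w.
  case=> q _ [/= Yq [w' [Sw' Yw' Hw']]]; apply: HS Sw' => i.
  by rewrite ltnS leq_eqVlt => /orP[/eqP ->|/Hw' //]; rewrite Yw' Yq.
apply: bigcupT_measurable_rat => q; apply: measurableI; first exact: mY.
apply: IHN => w w'' H [w' [Sw' Yw' Hw']]; exists w'; split => // i iN.
by rewrite Hw' // H.
Qed.

Lemma measurable_Lambda {R : realType} {b : R} {sigma : nat -> R} {d}
    {Omega : measurableType d} {P : probability Omega R}
    {X : nat -> nat -> Omega -> rat} {m : nat} {T M lambda : R} :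
  0 < b -> (forall p, 0 <= sigma p) ->
  (forall p i, prime p -> has_law_Xp P b p (X p i)) ->
  measurable (Lambda b sigma X m T M lambda).
Proof.
move=> b0 s0 lawX.
set L := fun p : nat => [set w | prime p -> M <= p%:R ->
     sup [set padic_abs p (scaled_path b sigma X p m s w) / p%:R
          | s in [set s : R | 0 <= s <= T]] < lambda].
rewrite (_ : Lambda _ _ _ _ _ _ _ = \bigcap_p L p); last first.
  by apply/seteqP; split => w /= Hw p; [move=> _; exact: Hw | exact: Hw p I].
apply: bigcapT_measurable => p.
have [pp|np] := boolP (prime p); last first.
  by rewrite (_ : L p = setT) //; apply/seteqP; split => // w _ /= pp; rewrite pp in np.
apply: (measurable_of_prefix (X p) (nsteps b sigma p m T)).
  by move=> i A; case: (lawX p i pp) => _ [mY _]; exact: mY.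
move=> w w' ww' /= Hw pp' Mp.
suff <- : [set padic_abs (R:=R) p (scaled_path b sigma X p m s w) / p%:R
          | s in [set s : R | 0 <= s <= T]] =
    [set padic_abs (R:=R) p (scaled_path b sigma X p m s w') / p%:R
          | s in [set s : R | 0 <= s <= T]] by exact: Hw.
apply: eq_imagel => s s0T; rewrite /scaled_path (@eq_walk _ (X p) _ w w') // => i ilt.
by apply: ww'; apply: leq_trans ilt (le_nsteps m b0 pp (s0 p) s0T).
Qed.

Lemma nneseries_tail_lt {R : realType} {f : nat -> R} {P : pred nat} {e : R} :
  (forall n, 0 <= f n) -> (\sum_(0 <= n <oo | P n) (f n)%:E < +oo)%E -> 0 < e ->
  exists N0, forall N, (N0 <= N)%N -> (\sum_(N <= n <oo | P n) (f n)%:E < e%:E)%E.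
Proof.
move=> f0 fin e0.
have tail0 : (\sum_(N <= n <oo | P n) (f n)%:E)%E @[N --> \oo] --> 0%:E.
  by apply: nneseries_tail_cvg fin _ => k _; rewrite lee_fin.
have [tail_fin tail_cvg] := (fine_cvgP _ _).1 tail0.
have : \forall N \near \oo, (\sum_(N <= n <oo | P n) (f n)%:E < e%:E)%E.
  near=> N; have /fineK <- : (\sum_(N <= n <oo | P n) (f n)%:E)%E \is a fin_num.
    by near: N.
  by rewrite lte_fin; near: N; exact: (cvgr_lt 0 tail_cvg).
by case=> N0 _ HN0; exists N0.
Unshelve. all: by end_near.
Qed.

Lemma limn_einf_ge {R : realType} (u : (\bar R)^nat) x :
  (forall m, (x <= u m)%E) -> (x <= limn_einf u)%E.
Proof.
move=> xu; rewrite limn_einf_lim; apply: lime_ge; first exact: is_cvg_einfs.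
by apply: nearW => n; apply/ereal_infP => _ [k _ <-]; exact: xu.
Qed.

Section large_steps.
Context {R : realType} (b : R) (sigma : nat -> R).
Context {d : measure_display} {Omega : measurableType d} {P : probability Omega R}.
Context (X : nat -> nat -> Omega -> rat) (m : nat) (T : R).
Hypotheses (b_gt0 : 0 < b) (sigma_ge0 : forall p, 0 <= sigma p) (T_ge0 : 0 <= T).
Hypothesis lawX : forall p i, prime p -> has_law_Xp P b p (X p i).

Definition large_step_at (p : nat) : set Omega :=
  if prime p then
    \big[setU/set0]_(i < nsteps b sigma p m T) [set w | ~ pscaled_int p m (X p i w)]
  else set0.

Definition large_step_event (K : nat) : set Omega :=
  \bigcup_(p in ~` `I_K) large_step_at p.

Lemma Lambda_of_no_large_step K lambda : 0 < lambda ->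
  (Num.truncn lambda^-1 < K)%N ->
  ~` large_step_event K `<=` Lambda b sigma X m T K%:R lambda.
Proof.
move=> l0 Kl w no_large p pp Kp; rewrite ler_nat in Kp.
have p0 : (0 : R) < p%:R by rewrite ltr0n prime_gt0.
have steps_small i : (i < nsteps b sigma p m T)%N -> pscaled_int p m (X p i w).
  move=> iT; apply/not_notP => notZ; apply: no_large; exists p.
    by rewrite /= ltnNge Kp.
  rewrite /large_step_at pp.
  by rewrite -(bigcup_mkord _ (fun i => [set w | ~ pscaled_int p m (X p i w)])); exists i.
have inv_p_lt : p%:R^-1 < lambda.
  rewrite invf_plt ?posrE // -truncn_lt_nat ?invr_ge0 ?ltW //.
  exact: leq_trans Kl Kp.
apply: le_lt_trans inv_p_lt; apply: ge_sup.
  by exists (padic_abs p (scaled_path b sigma X p m 0 w) / p%:R), 0; rewrite //= lexx.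
move=> _ [s s0T <-].
rewrite -[X in _ <= X]mul1r; apply: ler_wpM2r; first by rewrite invr_ge0 ltW.
apply: padic_abs_int_le1 => //; apply: walk_pscaled_int => i iS.
by apply: steps_small; apply: leq_trans iS (le_nsteps m b_gt0 pp (sigma_ge0 p) s0T).
Qed.

Lemma measurable_large_step_at p : measurable (large_step_at p).
Proof.
rewrite /large_step_at; case: ifP => pp //; apply: bigsetU_measurable => i _.
by case: (lawX p i pp) => _ [mY _]; exact: (mY [set q | ~ pscaled_int p m q]).
Qed.

Lemma measurable_large_step_event K : measurable (large_step_event K).
Proof. by apply: bigcup_measurable => p _; exact: measurable_large_step_at. Qed.

Lemma prob_large_step_event K :
  (P (large_step_event K) <= T%:E * \sum_(K <= p <oo | prime p) (sigma p)%:E)%E.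
Proof.
apply: le_trans (measure_sigma_subadditive_tail _ _ _ _) _.
- exact: measurable_large_step_at.
- exact: measurable_large_step_event.
- exact: subset_refl.
apply: le_trans (_ : _ <= \sum_(K <= p <oo) (if prime p then (T * sigma p)%:E else 0))%E _.
  apply: lee_nneseries => [p _ _|p _]; first exact: measure_ge0.
  rewrite /large_step_at; case: ifP => pp; last by rewrite measure0.
  by apply: prob_large_step_before => // i; exact: lawX.
rewrite -eseries_mkcond; under eq_eseriesr do rewrite EFinM.
by rewrite nneseriesZl // => p _; rewrite lee_fin.
Qed.

Lemma prob_Lambda_ge K lambda : 0 < lambda -> (Num.truncn lambda^-1 < K)%N ->
  (1 - T%:E * \sum_(K <= p <oo | prime p) (sigma p)%:E
     <= P (Lambda b sigma X m T K%:R lambda))%E.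
Proof.
move=> l0 Kl; have mL := measurable_large_step_event K.
have no_large : (1 - T%:E * \sum_(K <= p <oo | prime p) (sigma p)%:E
    <= P (~` large_step_event K))%E.
  have -> : P (~` large_step_event K) = (1 - P (large_step_event K))%E.
    exact: probability_setC.
  by apply: leeB => //; exact: prob_large_step_event.
apply: le_trans no_large _; apply: le_measure; rewrite ?inE.
- exact: measurableC.
- exact: measurable_Lambda b_gt0 sigma_ge0 lawX.
- exact: Lambda_of_no_large_step.
Qed.

End large_steps.

Theorem lemma3 (R : realType) (b : R) (sigma : nat -> R)
  (d : measure_display) (Omega : measurableType d) (P : probability Omega R)
  (X : nat -> nat -> Omega -> rat) :
  0 < b ->
  (forall p, 0 <= sigma p) ->
  (\sum_(0 <= n <oo | prime n) (sigma n)%:E < +oo)%E ->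
  (forall p i, prime p -> has_law_Xp P b p (X p i)) ->
  mutually_independent P X ->
  forall T lambda eps : R, 0 < T -> 0 < lambda -> 0 < eps ->
  exists M : R, 0 < M /\
    ((1 - eps)%:E < limn_einf (fun m : nat => P (Lambda b sigma X m T M lambda)))%E.
Proof.
move=> b0 s0 sum_fin lawX _ T lambda eps T0 l0 e0.
have e'0 : 0 < eps / (2 * T) by apply: divr_gt0 => //; lra.
have [K0 tail_lt] := nneseries_tail_lt s0 sum_fin e'0.
set K := maxn K0 (Num.truncn lambda^-1).+1.
have tail_K : (T%:E * \sum_(K <= p <oo | prime p) (sigma p)%:E <= (eps / 2)%:E)%E.
  apply: le_trans (_ : T%:E * (eps / (2 * T))%:E <= _)%E.
    by rewrite lee_pmul2l ?lte_fin // ltW // tail_lt // leq_maxl.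
  by rewrite -EFinM lee_fin (_ : T * _ = eps / 2) //; field; lra.
exists K%:R; split; first by rewrite ltr0n /K leq_max ltn0Sn orbT.
apply: lt_le_trans (_ : (1 - eps / 2)%:E <= _)%E; first by rewrite lte_fin; lra.
apply: limn_einf_ge => m.
apply: le_trans (prob_Lambda_ge _ _ _ m T b0 s0 (ltW T0) lawX K lambda l0 _).
  by rewrite EFinB leeB.
by rewrite /K leq_max ltnSn orbT.
Qed.
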